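(* The permutation representability problem is polynomial-time reducible to the group representability problem on trees.
   Context: Permutation representability problem: given a finite group $G$ (by its multiplication table) and an integer $n$ in unary, decide whether there is a nontrivial homomorphism from $G$ to the symmetric group $S_n$. Group representability problem on trees: given a finite group $G$ (by its multiplication table) and a finite tree $T$, decide whether there is a nontrivial homomorphism from $G$ to the automorphism group $\mathrm{Aut}(T)$ of $T$. *)

From mathcomp Require Import all_boot all_fingroup.
Set Implicit Arguments. Unset Strict Implicit. Unset Printing Implicit Defensive.

Definition sym := 'I_3.
Definition One : sym := @Ordinal 3 0 isT.
Definition Sep : sym := @Ordinal 3 1 isT.
Definition Stop : sym := @Ordinal 3 2 isT.

Definition enc_nat (k : nat) : seq sym := rcons (nseq k One) Sep.

Definition enc_tab (m : nat) (t : 'I_m -> 'I_m -> 'I_m) : seq sym :=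
  flatten [seq enc_nat (t i j) | i <- enum 'I_m, j <- enum 'I_m].

Definition enc_graph (k : nat) (E : seq ('I_k * 'I_k)) : seq sym :=
  enc_nat k ++ flatten [seq enc_nat e.1 ++ enc_nat e.2 | e : 'I_k * 'I_k <- E].

Definition is_group_table (m : nat) (t : 'I_m -> 'I_m -> 'I_m) : Prop :=
  (forall a b c, t (t a b) c = t a (t b c)) /\
  exists e : 'I_m, (forall a, t e a = a /\ t a e = a) /\
                   (forall a, exists b, t a b = e /\ t b a = e).

(* nontrivial homomorphism from the table group into a set A of permutations
   (A will be a subgroup: S_n itself or Aut(T)) *)
Definition nontrivial_hom_into (m : nat) (t : 'I_m -> 'I_m -> 'I_m)
    (T : finType) (A : {set {perm T}}) : Prop :=
  exists phi : 'I_m -> {perm T},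
    (forall a, phi a \in A) /\
    (forall a b, phi (t a b) = phi a * phi b)%g /\
    (exists a, phi a != 1%g).

Definition adj_of (k : nat) (E : seq ('I_k * 'I_k)) : rel 'I_k :=
  fun u v => ((u, v) \in E) || ((v, u) \in E).

Definition is_tree (k : nat) (E : seq ('I_k * 'I_k)) : Prop :=
  0 < k /\
  (forall u, ~~ adj_of E u u) /\
  (forall u v, connect (adj_of E) u v) /\
  (forall c : seq 'I_k, uniq c -> 2 < size c -> ~~ path.cycle (adj_of E) c).

Definition Aut_graph (k : nat) (E : seq ('I_k * 'I_k)) : {set {perm 'I_k}} :=
  [set s : {perm 'I_k} | [forall u, forall v, adj_of E (s u) (s v) == adj_of E u v]].

(* Instances not of the described form are no-instances. *)
Definition PermRep (w : seq sym) : Prop :=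
  exists (m : nat) (t : 'I_m -> 'I_m -> 'I_m) (n : nat),
    w = enc_tab t ++ Stop :: nseq n One /\
    is_group_table t /\ nontrivial_hom_into t [set: {perm 'I_n}].

Definition TreeRep (w : seq sym) : Prop :=
  exists (m : nat) (t : 'I_m -> 'I_m -> 'I_m) (k : nat) (E : seq ('I_k * 'I_k)),
    w = enc_tab t ++ Stop :: enc_graph E /\
    is_group_table t /\ is_tree E /\ nontrivial_hom_into t (Aut_graph E).

Inductive move := MoveL | MoveR | Stay.

Record TM := {
  tm_state : finType;
  tm_work : finType;           (* extra (non-output) tape symbols *)
  tm_start : tm_state;
  (* None as result = halt; tape cells are option (sym + work), None = blank *)
  tm_delta : tm_state -> option (sym + tm_work) ->
             option (tm_state * option (sym + tm_work) * move)
}.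

(* configuration: state, cells left of head (nearest first), cells from head rightwards *)
Definition config (M : TM) : Type :=
  (tm_state M * seq (option (sym + tm_work M)) * seq (option (sym + tm_work M)))%type.

Definition init_config (M : TM) (w : seq sym) : config M :=
  (tm_start M, [::], [seq Some (inl x) | x <- w]).

Definition cur_symbol (M : TM) (c : config M) : option (sym + tm_work M) :=
  head None c.2.

Definition step (M : TM) (c : config M) : option (config M) :=
  let: (q, l, r) := c in
  match tm_delta q (head None r) with
  | None => None
  | Some (q', x, mv) =>
      let r' := x :: behead r in
      Some (match mv with
            | Stay => (q', l, r')
            | MoveR => (q', x :: l, behead r')
            | MoveL => (q', behead l, head None l :: r')
            end)
  end.

Fixpoint run (M : TM) (k : nat) (c : config M) : option (config M) :=
  if k is k'.+1 then obind (@run M k') (@step M c) else Some c.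

Definition tape_output (M : TM) (c : config M) : seq sym :=
  pmap (fun x : option (sym + tm_work M) =>
          if x is Some (inl s) then Some s else None) (catrev c.1.2 c.2).

Definition halts_with (M : TM) (w : seq sym) (k : nat) (y : seq sym) : Prop :=
  exists c : config M, @run M k (init_config M w) = Some c /\ @step M c = None /\ @tape_output M c = y.

Definition poly_reducible (L1 L2 : seq sym -> Prop) : Prop :=
  exists (M : TM) (a d : nat),
    forall w, exists (k : nat) (y : seq sym),
      halts_with M w k y /\ k <= a * size w ^ d + a /\ (L1 w <-> L2 y).

(* For m >= 2 an automorphism of the star with m leaves fixes its centre, and the
   stabiliser of a point in S_(m+1) is S_m; so a group maps nontrivially into S_m iff it
   maps nontrivially into the automorphism group of that star.  The reduction keeps the
   group table and replaces the unary m by the star.  For m <= 1 the group S_m is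
   trivial, so these instances, like the malformed ones, are sent to the one-vertex tree,
   whose automorphism group is trivial too.  A one-tape machine writes the star in m
   rounds, the i-th appending the edge (0, i) by copying a unary counter of i marked
   leaves to the end of the tape; each copy walks over O(m^2) cells, so the machine runs
   in time O(|w|^4). *)

From HB Require Import structures.
From mathcomp Require Import all_boot all_fingroup.
From mathcomp Require Import zify.
Set Implicit Arguments. Unset Strict Implicit. Unset Printing Implicit Defensive.

Implicit Types (w pre rest g : seq sym).

Lemma nseqSr T n (x : T) : nseq n.+1 x = rcons (nseq n x) x.
Proof. by elim: n => //= n <-. Qed.

Lemma leq_expn n k : 0 < k -> n <= n ^ k.
Proof. by case: n => // n k_gt0; rewrite -{1}(expn1 n.+1) leq_pexp2l. Qed.

(** * Decoding instances *)

Lemma enc_nat_cat_inj a b s s' :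
  enc_nat a ++ s = enc_nat b ++ s' -> a = b /\ s = s'.
Proof.
elim: a b => [|a IH] [|b] //=; first by case=> ->.
by case=> /IH [-> ->].
Qed.

Lemma Stop_notin_enc_nat k : Stop \notin enc_nat k.
Proof. by elim: k => [|k IH] //=; rewrite inE negb_or IH andbT. Qed.

Lemma Stop_notin_flatten (ss : seq (seq sym)) :
  {in ss, forall s, Stop \notin s} -> Stop \notin flatten ss.
Proof. by move=> ssS; apply/negP => /flattenP [s /ssS/negP]. Qed.

Lemma Stop_notin_enc_tab m (t : 'I_m -> 'I_m -> 'I_m) : Stop \notin enc_tab t.
Proof.
apply: Stop_notin_flatten => s /flattenP [s' /mapP [i _ ->]] /mapP [j _ ->].
exact: Stop_notin_enc_nat.
Qed.

Lemma cat_Stop_inj (p1 p2 s1 s2 : seq sym) :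
  Stop \notin p1 -> Stop \notin p2 ->
  p1 ++ Stop :: s1 = p2 ++ Stop :: s2 -> p1 = p2 /\ s1 = s2.
Proof.
elim: p1 p2 => [|x p1 IH] [|y p2] /=; rewrite ?inE ?negb_or.
- by move=> _ _ [].
- by move=> _ /andP[/negP nyS _] [eyS]; case: nyS; rewrite eyS.
- by move=> /andP[/negP nxS _] _ [exS]; case: nxS; rewrite exS.
- by move=> /andP[_ p1S] /andP[_ p2S] [-> /(IH _ p1S p2S) [-> ->]].
Qed.

Lemma enc_graph_order k k' (E : seq ('I_k * 'I_k)) (E' : seq ('I_k' * 'I_k')) :
  enc_graph E = enc_graph E' -> k = k'.
Proof. by case/enc_nat_cat_inj. Qed.

Lemma enc_graph_inj k (E E' : seq ('I_k * 'I_k)) : enc_graph E = enc_graph E' -> E = E'.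
Proof.
case/enc_nat_cat_inj=> _; elim: E E' => [|[a b] E IH] [|[c d] E'] //=.
- by rewrite -catA; case: (nat_of_ord c).
- by rewrite -catA; case: (nat_of_ord a).
rewrite -!catA => /enc_nat_cat_inj [/val_inj -> /enc_nat_cat_inj [/val_inj ->]].
by move/IH ->.
Qed.

(** * Stars *)

Definition star (n : nat) : seq ('I_n.+1 * 'I_n.+1) :=
  [seq (ord0, inord j) | j <- iota 1 n].

Lemma mem_star n (u v : 'I_n.+1) :
  ((u, v) \in star n) = (u == ord0) && (v != ord0).
Proof.
apply/idP/idP.
  case/mapP=> j; rewrite mem_iota => /andP[j1 jn] [-> ->]; rewrite eqxx /=.
  apply/eqP => /(congr1 val); rewrite /= inordK; last by rewrite -add1n.
  by move=> j0; rewrite j0 in j1.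
case/andP => /eqP -> v0; apply/mapP; exists (val v); last by rewrite inord_val.
rewrite mem_iota lt0n; apply/andP; split.
  by apply: contra v0 => /eqP h; apply/eqP/val_inj.
by rewrite addnC addn1 ltn_ord.
Qed.

Lemma adj_star n (u v : 'I_n.+1) :
  adj_of (star n) u v = (u == ord0) (+) (v == ord0).
Proof. by rewrite /adj_of !mem_star; case: (u == ord0); case: (v == ord0). Qed.

Lemma star_tree n : is_tree (star n).
Proof.
have centre_connect u : connect (adj_of (star n)) ord0 u.
  case: (eqVneq u ord0) => [->|u0]; first exact: connect0.
  by apply: connect1; rewrite adj_star eqxx (negbTE u0).
split=> //; split; first by move=> u; rewrite adj_star addbb.
split.
  have adj_sym : symmetric (adj_of (star n)) by move=> x y; rewrite !adj_star addbC.
  move=> u v; apply: connect_trans (centre_connect v).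
  by rewrite (sym_connect_sym adj_sym).
(* In a cycle of length at least 3, the centre has two distinct cycle neighbours
   that are both leaves, and leaves are adjacent only to the centre. *)
case=> [|x [|y [|z r]]] //= cU _.
rewrite /path.cycle /= !adj_star.
move: cU; rewrite /= !inE !negb_or => /and4P[/and3P[xy xz xr] /andP[yz yr] _ _].
case: (eqVneq x ord0) => [ex|x0] /=.
  by subst x; move: xy xz; rewrite ![ord0 == _]eq_sym => /negbTE-> /negbTE->.
case: (eqVneq y ord0) => [ey|y0] //=; subst y.
rewrite eq_sym in yz; rewrite (negbTE yz) /=.
case: r xr yr => [|u r] /= xr yr; rewrite !adj_star (negbTE yz) /=.
  by rewrite (negbTE x0).
by case: (eqVneq u ord0) => [eu|//]; rewrite eu inE eqxx in yr.
Qed.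

Lemma Aut_star n : Aut_graph (star n.+2) = [set p : {perm 'I_n.+3} | p ord0 == ord0].
Proof.
apply/setP=> p; rewrite !inE; apply/forallP/eqP => [autp | p0 u].
  (* Otherwise every leaf is adjacent to [p ord0] and so is mapped to the centre. *)
  apply/eqP/negPn/negP => p0.
  have leaf_to_centre (v : 'I_n.+3) : v != ord0 -> p v = ord0.
    move=> v0; move/forallP: (autp ord0) => /(_ v) /eqP.
    by rewrite !adj_star eqxx (negbTE v0) (negbTE p0) /=; case: eqP.
  have : lift ord0 (ord0 : 'I_n.+2) = lift ord0 ord_max.
    by apply: (@perm_inj _ p); rewrite !leaf_to_centre // eq_sym neq_lift.
  by move/lift_inj/(congr1 val).
have p_centre x : (p x == ord0) = (x == ord0) by rewrite -{1}p0 (inj_eq perm_inj).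
by apply/forallP => v; rewrite !adj_star !p_centre.
Qed.

Section PermFixingZero.
Variables (n : nat) (p : {perm 'I_n.+1}).
Hypothesis p0 : p ord0 = ord0.

Definition restr0_fun (k : 'I_n) : 'I_n := odflt k (unlift ord0 (p (lift ord0 k))).

Lemma lift_restr0_fun k : lift ord0 (restr0_fun k) = p (lift ord0 k).
Proof.
rewrite /restr0_fun; case: unliftP => [j -> //|].
by rewrite -{2}p0 => /perm_inj /eqP; rewrite eq_sym (negbTE (neq_lift _ _)).
Qed.

Lemma restr0_fun_inj : injective restr0_fun.
Proof.
move=> a b e; apply: (@lift_inj _ ord0); apply: (@perm_inj _ p).
by rewrite -!lift_restr0_fun e.
Qed.

Definition restr0 : {perm 'I_n} := perm restr0_fun_inj.

Lemma lift_perm_restr0 : lift_perm ord0 ord0 restr0 = p.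
Proof.
apply/permP => x; case: (unliftP ord0 x) => [j ->|->].
  by rewrite lift_perm_lift permE lift_restr0_fun.
by rewrite lift_perm_id p0.
Qed.

End PermFixingZero.

Lemma lift_perm0_inj n : injective (@lift_perm n ord0 ord0).
Proof.
move=> s1 s2 e; apply/permP => k; apply: (@lift_inj _ ord0).
by rewrite -!(@lift_perm_lift _ ord0 ord0) e.
Qed.

Lemma nontrivial_hom_into_stab0 m (t : 'I_m -> 'I_m -> 'I_m) n :
  nontrivial_hom_into t [set: {perm 'I_n}] <->
  nontrivial_hom_into t [set p : {perm 'I_n.+1} | p ord0 == ord0].
Proof.
split=> [[phi [_ [phiM [a phi_a]]]] | [psi [psi0 [psiM [a psi_a]]]]].
  exists (fun a => lift_perm ord0 ord0 (phi a)); split.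
    by move=> b; rewrite inE lift_perm_id.
  split; first by move=> b c; rewrite phiM lift_permM.
  exists a; apply: contra phi_a => /eqP e; apply/eqP.
  by apply: lift_perm0_inj; rewrite e lift_perm1.
have fix0 b : psi b ord0 = ord0 by apply/eqP; have := psi0 b; rewrite inE.
exists (fun b => restr0 (fix0 b)); split; first by move=> b; rewrite inE.
split.
  move=> b c; apply: lift_perm0_inj.
  by rewrite -(@lift_permM _ ord0 ord0 ord0) !lift_perm_restr0 psiM.
exists a; apply: contra psi_a => /eqP e; apply/eqP.
by rewrite -(lift_perm_restr0 (fix0 a)) e lift_perm1.
Qed.

Lemma nontrivial_hom_into_star m (t : 'I_m -> 'I_m -> 'I_m) n :
  nontrivial_hom_into t [set: {perm 'I_n.+2}] <->
  nontrivial_hom_into t (Aut_graph (star n.+2)).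
Proof. by rewrite Aut_star; apply: nontrivial_hom_into_stab0. Qed.

Lemma nontrivial_hom_into_small m (t : 'I_m -> 'I_m -> 'I_m) n (A : {set {perm 'I_n}}) :
  n <= 1 -> ~ nontrivial_hom_into t A.
Proof.
move=> n_le1 [phi [_ [_ [a /eqP[]]]]]; apply/permP => x; rewrite perm1.
have ord_le1_0 (y : 'I_n) : val y = 0 by apply/eqP; rewrite -leqn0 -ltnS (leq_trans (ltn_ord y) n_le1).
by apply: val_inj; rewrite !ord_le1_0.
Qed.

(** * The reduction *)

Lemma Stop_in_PermRep w : PermRep w -> Stop \in w.
Proof. by case=> m [t [n [-> _]]]; rewrite mem_cat inE eqxx orbT. Qed.

Lemma Stop_in_TreeRep w : TreeRep w -> Stop \in w.
Proof. by case=> m [t [k [E [-> _]]]]; rewrite mem_cat inE eqxx orbT. Qed.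

Lemma PermRep_cat_inv pre rest : Stop \notin pre -> PermRep (pre ++ Stop :: rest) ->
  exists m (t : 'I_m -> 'I_m -> 'I_m) n, [/\ pre = enc_tab t, rest = nseq n One,
    is_group_table t & nontrivial_hom_into t [set: {perm 'I_n}]].
Proof.
move=> preS [m [t [n [e [tG phi]]]]].
have [-> ->] := cat_Stop_inj preS (Stop_notin_enc_tab t) e.
by exists m, t, n.
Qed.

Lemma TreeRep_cat_inv pre g : Stop \notin pre -> TreeRep (pre ++ Stop :: g) ->
  exists m (t : 'I_m -> 'I_m -> 'I_m) k (E : seq ('I_k * 'I_k)),
    [/\ pre = enc_tab t, g = enc_graph E, is_group_table t, is_tree E
      & nontrivial_hom_into t (Aut_graph E)].
Proof.
move=> preS [m [t [k [E [e [tG [ET phi]]]]]]].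
have [-> ->] := cat_Stop_inj preS (Stop_notin_enc_tab t) e.
by exists m, t, k, E.
Qed.

Lemma PermRep_star pre n : Stop \notin pre ->
  PermRep (pre ++ Stop :: nseq n.+2 One) <-> TreeRep (pre ++ Stop :: enc_graph (star n.+2)).
Proof.
move=> preS; split.
  case/(PermRep_cat_inv preS)=> m [t [n' [-> e tG phi]]].
  move/(congr1 size): e; rewrite !size_nseq => en; subst n'.
  exists m, t, n.+3, (star n.+2); split=> //; split=> //; split; first exact: star_tree.
  exact/nontrivial_hom_into_star.
case/(TreeRep_cat_inv preS)=> m [t [k [E [-> eE tG _ phi]]]].
have ek := enc_graph_order eE; subst k.
rewrite -(enc_graph_inj eE) in phi.
by exists m, t, n.+2; split=> //; split=> //; apply/nontrivial_hom_into_star.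
Qed.

(* [One; Sep] encodes the one-vertex tree, whose automorphism group is trivial. *)
Definition reject_instance (pre : seq sym) : seq sym := pre ++ [:: Stop; One; Sep].

Lemma not_PermRep_reject pre rest : Stop \notin pre ->
  (forall n, rest <> nseq n.+2 One) -> ~ PermRep (pre ++ Stop :: rest).
Proof.
move=> preS not_star /(PermRep_cat_inv preS) [m [t [[|[|n]] [_ e _ phi]]]].
- exact: nontrivial_hom_into_small phi.
- exact: nontrivial_hom_into_small phi.
- exact: not_star e.
Qed.

Lemma not_TreeRep_reject pre : Stop \notin pre -> ~ TreeRep (reject_instance pre).
Proof.
move=> preS /(TreeRep_cat_inv preS) [m [t [k [E [_ eE _ _ phi]]]]].
have ek : 1 = k := enc_graph_order (eE : enc_graph ([::] : seq ('I_1 * 'I_1)) = _).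
by subst k; apply: nontrivial_hom_into_small phi.
Qed.

Definition reduce_rest (pre rest : seq sym) : seq sym :=
  if all (pred1 One) rest && (1 < size rest) then pre ++ Stop :: enc_graph (star (size rest))
  else reject_instance pre.

Definition reduce (w : seq sym) : seq sym :=
  if Stop \in w then reduce_rest (take (index Stop w) w) (drop (index Stop w).+1 w) else w.

Variant reduce_spec : seq sym -> seq sym -> Type :=
| ReduceNoStop w of Stop \notin w : reduce_spec w w
| ReduceStar pre n of Stop \notin pre :
    reduce_spec (pre ++ Stop :: nseq n.+2 One) (pre ++ Stop :: enc_graph (star n.+2))
| ReduceReject pre rest of Stop \notin pre & (forall n, rest <> nseq n.+2 One) :
    reduce_spec (pre ++ Stop :: rest) (reject_instance pre).

Lemma reduceP w : reduce_spec w (reduce w).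
Proof.
rewrite /reduce; case: ifPn => [wS|]; last exact: ReduceNoStop.
set pre := take _ w; set rest := drop _ w.
have preS : Stop \notin pre by rewrite in_take // ltnn.
have -> : w = pre ++ Stop :: rest.
  by rewrite -{1}(cat_take_drop (index Stop w) w) (drop_nth Stop) ?index_mem ?nth_index.
clearbody pre rest; rewrite /reduce_rest; case: ifPn => [/andP[/all_pred1P erest]|not_star].
  by rewrite erest size_nseq; case: (size rest) => [|[|n]] // _; apply: ReduceStar.
apply: ReduceReject => // n erest; move: not_star.
by rewrite erest all_pred1_nseq size_nseq.
Qed.

Lemma PermRep_reduce w : PermRep w <-> TreeRep (reduce w).
Proof.
case: reduceP => [{}w wS | pre n preS | pre rest preS not_star].
- by split=> [/Stop_in_PermRep | /Stop_in_TreeRep]; rewrite (negbTE wS).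
- exact: PermRep_star.
- by split=> [/(not_PermRep_reject preS not_star) | /(not_TreeRep_reject preS)].
Qed.

(** * A Turing machine computing [reduce] *)

Inductive state :=
  | Scan | Count0 | Count1 | CountMany | Erase | EmitSep | Halt
  | Round | AppSepToCopy | BackToCopy | Copy | AppOneToCopy | BackToRestore
  | Restore | AppSepToRound | BackToRound | BackToFinish | Finish.

Definition states := [:: Scan; Count0; Count1; CountMany; Erase; EmitSep; Halt;
  Round; AppSepToCopy; BackToCopy; Copy; AppOneToCopy; BackToRestore;
  Restore; AppSepToRound; BackToRound; BackToFinish; Finish].

Definition state_code (q : state) : nat :=
  match q with
  | Scan => 0 | Count0 => 1 | Count1 => 2 | CountMany => 3 | Erase => 4
  | EmitSep => 5 | Halt => 6 | Round => 7 | AppSepToCopy => 8 | BackToCopy => 9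
  | Copy => 10 | AppOneToCopy => 11 | BackToRestore => 12 | Restore => 13
  | AppSepToRound => 14 | BackToRound => 15 | BackToFinish => 16 | Finish => 17
  end.

Lemma state_codeK : cancel state_code (nth Scan states). Proof. by case. Qed.
HB.instance Definition _ := Countable.copy state (can_type state_codeK).
Lemma states_enumP : Finite.axiom states. Proof. by case. Qed.
HB.instance Definition _ := isFinite.Build state states_enumP.

Inductive mark := Pending | Done | Copied | Erased.

Definition marks := [:: Pending; Done; Copied; Erased].

Definition mark_code (a : mark) : nat :=
  match a with Pending => 0 | Done => 1 | Copied => 2 | Erased => 3 end.

Lemma mark_codeK : cancel mark_code (nth Pending marks). Proof. by case. Qed.
HB.instance Definition _ := Countable.copy mark (can_type mark_codeK).
Lemma marks_enumP : Finite.axiom marks. Proof. by case. Qed.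
HB.instance Definition _ := isFinite.Build mark marks_enumP.

Definition cell := option (sym + mark).
Notation blank := (None : cell).
Notation sym_cell s := (Some (inl s) : cell).
Notation mark_cell a := (Some (inr a) : cell).

Definition transition := option (state * cell * move).

Definition append_at_end (q : state) (y : cell) (back : state) (x : cell) : transition :=
  if x is None then Some (back, y, MoveL) else Some (q, x, MoveR).

Definition return_to_Stop (q next : state) (x : cell) : transition :=
  if x == sym_cell Stop then Some (next, x, MoveR) else Some (q, x, MoveL).

Definition count_step (next at_end : state) (x : cell) : transition :=
  if x == sym_cell One then Some (next, mark_cell Pending, MoveR)
  else if x is None then Some (at_end, sym_cell One, MoveR)
  else Some (Erase, mark_cell Erased, MoveR).

(* On input [pre Stop 1^m] the ones become [Pending] leaves and [1 Sep] is appended;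
   turned back into ones by [Finish], the leaves complete the vertex count
   [1^(m+1) Sep].  Each [Round] marks one more leaf [Done] and appends the edge
   [Sep 1^i Sep]: [Copy] turns the [Done] leaves into [Copied] one at a time, appending
   a [1] for each, and [Restore] turns them back.  A malformed rest is [Erased], and
   then, as for [m <= 1], the machine appends [1 Sep] and halts. *)
Definition delta (q : state) (x : cell) : transition :=
  match q with
  | Scan => if x is None then None
            else Some (if x == sym_cell Stop then Count0 else Scan, x, MoveR)
  | Count0 => count_step Count1 EmitSep x
  | Count1 => count_step CountMany EmitSep x
  | CountMany => count_step CountMany AppSepToRound x
  | Erase => if x is None then Some (EmitSep, sym_cell One, MoveR)
             else Some (Erase, mark_cell Erased, MoveR)
  | EmitSep => Some (Halt, sym_cell Sep, MoveR)
  | Halt => None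
  | Round => if x == mark_cell Done then Some (Round, x, MoveR)
             else if x == mark_cell Pending then Some (AppSepToCopy, mark_cell Done, MoveR)
             else if x is Some (inl _) then Some (BackToFinish, x, Stay) else None
  | AppSepToCopy => append_at_end AppSepToCopy (sym_cell Sep) BackToCopy x
  | AppOneToCopy => append_at_end AppOneToCopy (sym_cell One) BackToCopy x
  | AppSepToRound => append_at_end AppSepToRound (sym_cell Sep) BackToRound x
  | BackToCopy => return_to_Stop BackToCopy Copy x
  | BackToRestore => return_to_Stop BackToRestore Restore x
  | BackToRound => return_to_Stop BackToRound Round x
  | BackToFinish => return_to_Stop BackToFinish Finish x
  | Copy => if x == mark_cell Copied then Some (Copy, x, MoveR)
            else if x == mark_cell Done then Some (AppOneToCopy, mark_cell Copied, MoveR)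
            else Some (BackToRestore, x, Stay)
  | Restore => if x == mark_cell Copied then Some (Restore, mark_cell Done, MoveR)
               else Some (AppSepToRound, x, Stay)
  | Finish => if x == mark_cell Done then Some (Finish, sym_cell One, MoveR) else None
  end.

Definition M : TM := {| tm_state := state; tm_work := mark; tm_start := Scan; tm_delta := delta |}.

Definition cfg := (state * seq cell * seq cell)%type.

Definition reaches (c c' : cfg) (b : nat) := exists2 k, k <= b & @run M k c = Some c'.

Lemma run_add k1 k2 (c : cfg) : @run M (k1 + k2) c = obind (@run M k2) (@run M k1 c).
Proof. by elim: k1 c => [|k1 IH] c //=; case: (@step M c). Qed.

Lemma reaches_trans c1 c2 c3 b1 b2 :
  reaches c1 c2 b1 -> reaches c2 c3 b2 -> reaches c1 c3 (b1 + b2).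
Proof.
case=> k1 k1b e1 [k2 k2b e2]; exists (k1 + k2); first exact: leq_add.
by rewrite run_add e1.
Qed.

Lemma reaches_le c c' b b' : b <= b' -> reaches c c' b -> reaches c c' b'.
Proof. by move=> bb' [k kb e]; exists k => //; apply: leq_trans bb'. Qed.

Lemma reaches_refl c : reaches c c 0.
Proof. by exists 0. Qed.

Lemma reaches_step_trans (c c'' : cfg) b :
  oapp (fun c' => reaches c' c'' b) False (@step M c) -> reaches c c'' b.+1.
Proof.
case e: (@step M c) => [c'|] //= [k kb ek].
by exists k.+1 => //=; rewrite e.
Qed.

Lemma walk_right q f (s l r : seq cell) :
  {in s, forall x, delta q x = Some (q, f x, MoveR)} ->
  reaches (q, l, s ++ r) (q, catrev (map f s) l, r) (size s).
Proof.
elim: s l => [|x s IH] l qR /=; first exact: reaches_refl.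
apply: reaches_step_trans; rewrite /step /= qR ?mem_head //=.
by apply: IH => y ys; rewrite qR // inE ys orbT.
Qed.

Lemma walk_right_nseq q x y n l r :
  delta q x = Some (q, y, MoveR) ->
  reaches (q, l, nseq n x ++ r) (q, nseq n y ++ l, r) n.
Proof.
move=> qR; have := @walk_right q (fun _ => y) (nseq n x) l r.
by rewrite map_nseq catrevE rev_nseq size_nseq; apply=> z /nseqP[-> _].
Qed.

Lemma walk_right_overwrite q y (s l r : seq cell) :
  {in s, forall x, delta q x = Some (q, y, MoveR)} ->
  reaches (q, l, s ++ r) (q, nseq (size s) y ++ l, r) (size s).
Proof.
move=> qR; have := @walk_right q (fun=> y) s l r qR; rewrite catrevE.
have -> : map (fun=> y) s = nseq (size s) y by elim: s {qR} => //= x s ->.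
by rewrite rev_nseq.
Qed.

Lemma walk_left q (s : seq cell) x0 l r :
  {in belast x0 s, forall x, delta q x = Some (q, x, MoveL)} ->
  reaches (q, s ++ l, x0 :: r) (q, l, catrev s (x0 :: r)) (size s).
Proof.
elim: s x0 r => [|y s IH] x0 r qL /=; first exact: reaches_refl.
apply: reaches_step_trans; rewrite /step /= qL ?mem_head //=.
by apply: IH => z zs; rewrite qL //= inE zs orbT.
Qed.

Definition is_content (x : cell) := (x != blank) && (x != sym_cell Stop).

Lemma is_content_nseq n x : is_content x -> all is_content (nseq n x).
Proof. by move=> xC; rewrite all_nseq xC orbT. Qed.

Section Returns.
Variables (q next : state).
Hypothesis delta_q : forall x, delta q x = return_to_Stop q next x.

(* The head sits on [x]; [T] lies between the [Stop] cell and [x]. *)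
Lemma reaches_return (T : seq cell) x L r :
  all is_content (x :: T) ->
  reaches (q, rev T ++ sym_cell Stop :: L, x :: r)
          (next, sym_cell Stop :: L, T ++ x :: r) (size T + 2).
Proof.
move=> TC; rewrite addn2 -[(size T).+2]addn1.
apply: (@reaches_trans _ (q, L, sym_cell Stop :: T ++ x :: r)).
  have := @walk_left q (rcons (rev T) (sym_cell Stop)) x L r.
  rewrite cat_rcons catrevE rev_rcons revK size_rcons size_rev; apply=> y.
  rewrite belast_rcons inE mem_rev delta_q /return_to_Stop => /orP[/eqP ->|yT].
    by case/andP: TC => /andP[_ /negbTE ->].
  by move/allP/(_ y): TC; rewrite inE yT orbT => /(_ isT) /andP[_ /negbTE ->].
by apply: reaches_step_trans; rewrite /step /= delta_q /return_to_Stop eqxx /=; exists 0.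
Qed.

Variables (app : state) (y : cell).
Hypothesis delta_app : forall x, delta app x = append_at_end app y q x.

(* The head sits on the first cell of [r], and [T ++ r] lies between the
   [Stop] cell and the first blank. *)
Lemma reaches_append (T r : seq cell) L :
  all is_content (T ++ r) -> T ++ r != [::] ->
  reaches (app, rev T ++ sym_cell Stop :: L, r)
          (next, sym_cell Stop :: L, rcons (T ++ r) y)
          (size r + size (T ++ r) + 2).
Proof.
move=> TrC Tr0; rewrite -addnA.
apply: (@reaches_trans _ (app, rev (T ++ r) ++ sym_cell Stop :: L, [::])).
  have := @walk_right app id r (rev T ++ sym_cell Stop :: L) [::].
  rewrite map_id cats0 catrevE rev_cat -catA; apply=> x xr.
  move/allP/(_ x): TrC; rewrite mem_cat xr orbT => /(_ isT) /andP[].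
  by rewrite delta_app; case: x {xr}.
move: TrC Tr0; case/lastP: (T ++ r) => [|U u] // UuC _.
rewrite rev_rcons size_rcons addSn.
apply: reaches_step_trans; rewrite /step /= delta_app /=.
by rewrite -!cats1 -catA; apply: reaches_return; move: UuC; rewrite all_rcons.
Qed.

End Returns.

Lemma round_start i R L : all is_content R ->
  reaches (Round, sym_cell Stop :: L, nseq i (mark_cell Done) ++ mark_cell Pending :: R)
          (Copy, sym_cell Stop :: L, nseq i.+1 (mark_cell Done) ++ R ++ [:: sym_cell Sep])
          (2 * i + 2 * size R + 5).
Proof.
move=> RC; apply: reaches_le (reaches_trans
  (@walk_right_nseq Round (mark_cell Done) _ i _ _ erefl) (reaches_step_trans _)); last first.
  have := @reaches_append BackToCopy Copy (fun x => erefl) AppSepToCopy (sym_cell Sep)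
    (fun x => erefl) (nseq i.+1 (mark_cell Done)) R L.
  rewrite rev_nseq -cats1 -catA; apply=> //.
  by rewrite all_cat is_content_nseq.
by rewrite size_cat size_nseq; lia.
Qed.

Lemma copy_loop a R L : all is_content R -> forall d j, j + d = a ->
  reaches (Copy, sym_cell Stop :: L, nseq j (mark_cell Copied) ++ nseq d (mark_cell Done) ++
             R ++ sym_cell Sep :: nseq j (sym_cell One))
          (Copy, sym_cell Stop :: L, nseq a (mark_cell Copied) ++
             R ++ sym_cell Sep :: nseq a (sym_cell One))
          (d * (5 * (a + size R + 2))).
Proof.
move=> RC; elim=> [|d IH] j jda.
  by rewrite addn0 in jda; subst j; apply: reaches_refl.
set rest := nseq d (mark_cell Done) ++ R ++ sym_cell Sep :: nseq j (sym_cell One).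
have restC : all is_content rest by rewrite !all_cat /= !all_nseq RC !orbT.
apply: reaches_le (reaches_trans (@walk_right_nseq Copy (mark_cell Copied) _ j _ _ erefl)
  (reaches_step_trans _)); last first.
- apply: reaches_trans _ (IH j.+1 _); last by rewrite addSnnS.
  have := @reaches_append BackToCopy Copy (fun x => erefl) AppOneToCopy (sym_cell One)
    (fun x => erefl) (nseq j.+1 (mark_cell Copied)) rest L.
  rewrite rev_nseq (nseqSr j (sym_cell One)) /rest !rcons_cat; apply=> //.
  by rewrite all_cat is_content_nseq.
- by rewrite /rest !size_cat !size_nseq /= size_nseq; lia.
Qed.

Lemma round_finish a x X L :
  is_content x -> all is_content X -> x != mark_cell Copied -> x != mark_cell Done ->
  reaches (Copy, sym_cell Stop :: L, nseq a (mark_cell Copied) ++ x :: X)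
          (Round, sym_cell Stop :: L, rcons (nseq a (mark_cell Done) ++ x :: X) (sym_cell Sep))
          (4 * a + 2 * size X + 9).
Proof.
move=> xC XC /negbTE xCopied /negbTE xDone.
apply: reaches_le (reaches_trans (@walk_right_nseq Copy (mark_cell Copied) _ a _ _ erefl)
  (reaches_step_trans _)); last first.
  rewrite /step /= xCopied xDone /=.
  have := @reaches_return BackToRestore Restore (fun x => erefl) (nseq a (mark_cell Copied)) x L X.
  rewrite rev_nseq => back.
  apply: reaches_trans (back _) (reaches_trans
    (@walk_right_nseq Restore (mark_cell Copied) (mark_cell Done) a _ _ erefl)
    (reaches_step_trans _)); first by rewrite /= xC is_content_nseq.
  rewrite /step /= xCopied /=.
  have := @reaches_append BackToRound Round (fun x => erefl) AppSepToRound (sym_cell Sep)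
    (fun x => erefl) (nseq a (mark_cell Done)) (x :: X) L.
  rewrite rev_nseq; apply=> //; last by case: (nseq a _).
  by rewrite all_cat is_content_nseq //= xC.
by rewrite /= size_cat !size_nseq /=; lia.
Qed.

Lemma scan pre rest : Stop \notin pre ->
  reaches (Scan, [::], [seq sym_cell s | s <- pre ++ Stop :: rest])
          (Count0, sym_cell Stop :: rev [seq sym_cell s | s <- pre], [seq sym_cell s | s <- rest])
          (size pre).+1.
Proof.
move=> preS; rewrite map_cat.
have := @walk_right Scan id [seq sym_cell s | s <- pre] [::] [seq sym_cell s | s <- Stop :: rest].
rewrite map_id catrevE cats0 size_map => walk; rewrite -addn1.
apply: reaches_trans (walk _) (reaches_step_trans _); last by exists 0.
move=> _ /mapP[s sp ->] /=; case: eqP => // -[sS].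
by move: preS; rewrite -sS sp.
Qed.

Definition count_state (n : nat) : state :=
  match n with 0 => Count0 | 1 => Count1 | _ => CountMany end.

Lemma count n L r :
  reaches (Count0, sym_cell Stop :: L, nseq n (sym_cell One) ++ r)
          (count_state n, nseq n (mark_cell Pending) ++ sym_cell Stop :: L, r) n.
Proof.
case: n => [|[|n]]; first exact: reaches_refl.
  by apply: reaches_step_trans; exists 0.
do 2!apply: reaches_step_trans.
have := @walk_right_nseq CountMany (sym_cell One) (mark_cell Pending) n
  [:: mark_cell Pending, mark_cell Pending, sym_cell Stop & L] r erefl.
by rewrite -[_ :: _ :: _](cat_nseq 2) catA -nseqD addnC.
Qed.

Lemma count_step_other n x : x != sym_cell One -> x != blank ->
  delta (count_state n) x = Some (Erase, mark_cell Erased, MoveR).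
Proof. by case: n => [|[|n]] /=; rewrite /count_step => /negbTE ->; case: x. Qed.

Definition star_edges (n : nat) : seq sym := flatten [seq enc_nat 0 ++ enc_nat j | j <- iota 1 n].

Lemma enc_graph_star n : enc_graph (star n) = nseq n.+1 One ++ Sep :: star_edges n.
Proof.
rewrite /enc_graph /star /star_edges /enc_nat -map_comp -cats1 -catA /=.
congr (_ :: _ ++ _ :: flatten _); apply/eq_in_map => j.
by rewrite mem_iota => /andP[_ jn] /=; rewrite inordK // -add1n.
Qed.

Lemma star_edgesS n : star_edges n.+1 = star_edges n ++ Sep :: rcons (nseq n.+1 One) Sep.
Proof.
by rewrite /star_edges -[n.+1]addn1 iotaD map_cat flatten_cat /= cats0 add0n addn1.
Qed.

Lemma size_star_edges n : size (star_edges n) <= n * (n + 2).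
Proof.
elim: n => [|n IH] //; rewrite star_edgesS size_cat /= size_rcons size_nseq.
nia.
Qed.

Lemma Stop_notin_star_edges n : Stop \notin star_edges n.
Proof.
apply: Stop_notin_flatten => s /mapP [j _ ->].
by rewrite mem_cat negb_or !Stop_notin_enc_nat.
Qed.

(* The part of the output produced after the [n] leaf cells, once [i] edges are written. *)
Definition written (i : nat) : seq cell := [seq sym_cell s | s <- One :: Sep :: star_edges i].

Lemma writtenS i :
  written i.+1 = written i ++ sym_cell Sep :: rcons (nseq i.+1 (sym_cell One)) (sym_cell Sep).
Proof. by rewrite /written star_edgesS /= map_cat /= map_rcons map_nseq. Qed.

Lemma written_content i : all is_content (written i).
Proof.
rewrite /written /= all_map; apply/allP => s si /=.
by apply: contra (Stop_notin_star_edges i) => /eqP[<-].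
Qed.

Lemma round n i L : i < n ->
  reaches (Round, sym_cell Stop :: L,
             nseq i (mark_cell Done) ++ nseq (n - i) (mark_cell Pending) ++ written i)
          (Round, sym_cell Stop :: L,
             nseq i.+1 (mark_cell Done) ++ nseq (n - i.+1) (mark_cell Pending) ++ written i.+1)
          (10 * (n + 3) ^ 3).
Proof.
move=> lt_in; set a := i.+1.
set R := nseq (n - a) (mark_cell Pending) ++ written i.
have RC : all is_content R by rewrite all_cat is_content_nseq // written_content.
have -> : nseq (n - i) (mark_cell Pending) ++ written i = mark_cell Pending :: R.
  by rewrite /R /a -subnSK.
have [x [X [eX xCopied xDone]]] : exists x X, [/\ R ++ sym_cell Sep :: nseq a (sym_cell One) = x :: X,
    x != mark_cell Copied & x != mark_cell Done].
  by rewrite /R /written; case: (n - a) => [|k]; do 2 eexists.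
have [xC XC] : is_content x /\ all is_content X.
  by apply/andP; rewrite -[_ && _]/(all is_content (x :: X)) -eX all_cat RC /= is_content_nseq.
have -> : nseq a (mark_cell Done) ++ nseq (n - a) (mark_cell Pending) ++ written a =
          rcons (nseq a (mark_cell Done) ++ x :: X) (sym_cell Sep).
  by rewrite -eX /R writtenS -!cats1 -!catA.
apply: reaches_le (reaches_trans (round_start i L RC)
  (reaches_trans (copy_loop L RC (add0n a)) _)); last first.
  by rewrite eX; apply: round_finish.
have sX : size X = size R + a.
  by have := congr1 size eX; rewrite size_cat /= size_nseq; lia.
have sR : size R <= n * n + n + 2.
  rewrite /R size_cat size_nseq /written size_map /=.
  have := size_star_edges i; nia.
rewrite sX; move: (size R) sR => s sR; rewrite /a.
have a_le_n : i.+1 <= n by [].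
have : i.+1 * (5 * (i.+1 + s + 2)) <= n * (5 * (n + (n * n + n + 2) + 2)).
  by apply: leq_mul => //; lia.
rewrite !expnS expn0; nia.
Qed.

Lemma rounds n L i : i <= n ->
  reaches (Round, sym_cell Stop :: L, nseq n (mark_cell Pending) ++ written 0)
          (Round, sym_cell Stop :: L,
             nseq i (mark_cell Done) ++ nseq (n - i) (mark_cell Pending) ++ written i)
          (i * (10 * (n + 3) ^ 3)).
Proof.
elim: i => [|i IH] lt_in; first by rewrite subn0; apply: reaches_refl.
by rewrite mulSn addnC; apply: reaches_trans (IH (ltnW lt_in)) (round L lt_in).
Qed.

Definition finished n L : cfg :=
  (Finish, nseq n (sym_cell One) ++ sym_cell Stop :: L, written n).

Lemma finish n L :
  reaches (Round, sym_cell Stop :: L, nseq n (mark_cell Done) ++ written n) (finished n L) (3 * n + 3).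
Proof.
apply: reaches_le (reaches_trans (@walk_right_nseq Round (mark_cell Done) _ n _ _ erefl)
  (reaches_step_trans _)); last first.
  have := @reaches_return BackToFinish Finish (fun x => erefl) (nseq n (mark_cell Done))
    (sym_cell One) L (sym_cell Sep :: [seq sym_cell s | s <- star_edges n]).
  rewrite rev_nseq => back.
  apply: reaches_trans (back _) (@walk_right_nseq Finish (mark_cell Done) _ n _ _ erefl).
  by rewrite /= is_content_nseq.
by rewrite size_nseq; lia.
Qed.

Definition sym_of (x : cell) : option sym := if x is Some (inl s) then Some s else None.

Lemma tape_outputE (c : cfg) : @tape_output M c = pmap sym_of (rev c.1.2 ++ c.2).
Proof. by rewrite -catrevE. Qed.

Lemma pmap_sym_of_sym s : pmap sym_of [seq sym_cell x | x <- s] = s.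
Proof. by elim: s => //= x s ->. Qed.

Lemma pmap_sym_of_mark (W : seq mark) : pmap sym_of [seq mark_cell a | a <- W] = [::].
Proof. by elim: W. Qed.

Lemma halts_of_reaches w (c : cfg) b y :
  reaches (init_config M w) c b -> @step M c = None -> @tape_output M c = y ->
  exists2 k, k <= b & halts_with M w k y.
Proof. by case=> k kb run_k halt_c out_c; exists k => //; exists c. Qed.

Lemma run_noStop w : Stop \notin w -> exists2 k, k <= size w & halts_with M w k w.
Proof.
move=> wS.
have := @walk_right Scan id [seq sym_cell s | s <- w] [::] [::].
rewrite map_id cats0 size_map => walk; apply: halts_of_reaches (walk _) _ _.
- by move=> _ /mapP[s sw ->] /=; case: eqP => // -[sS]; move: wS; rewrite -sS sw.
- by [].
- by rewrite tape_outputE /= !catrevE !cats0 revK pmap_sym_of_sym.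
Qed.

Definition rejected L (W : seq mark) : cfg :=
  (Halt, sym_cell Sep :: sym_cell One :: [seq mark_cell a | a <- W] ++ sym_cell Stop :: L, [::]).

Lemma output_rejected pre W :
  @tape_output M (rejected (rev [seq sym_cell s | s <- pre]) W) = reject_instance pre.
Proof.
rewrite tape_outputE /= cats0 !rev_cons rev_cat rev_cons revK -map_rev -!cats1 -!catA.
by rewrite !pmap_cat pmap_sym_of_sym pmap_sym_of_mark.
Qed.

Lemma reject_short pre n : Stop \notin pre -> n <= 1 ->
  exists2 k, k <= size pre + n + 3 & halts_with M (pre ++ Stop :: nseq n One) k (reject_instance pre).
Proof.
move=> preS n_le1.
apply: halts_of_reaches _ _ (output_rejected pre (nseq n Pending)) => //.
rewrite -[nseq n One]cats0.
apply: (@reaches_le _ _ ((size pre).+1 + (n + 2))); first by lia.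
apply: reaches_trans (scan _ preS) _; rewrite map_cat map_nseq.
apply: reaches_trans (count _ _ _) _.
by case: n n_le1 => [|[|]] // _; do 2!apply: reaches_step_trans; exists 0.
Qed.

Lemma reject_junk pre n (y : sym) (r : seq sym) : Stop \notin pre -> y != One ->
  exists2 k, k <= size pre + n + size r + 5 &
    halts_with M (pre ++ Stop :: nseq n One ++ y :: r) k (reject_instance pre).
Proof.
move=> preS yOne.
apply: halts_of_reaches _ _ (output_rejected pre (nseq (size r) Erased ++ Erased :: nseq n Pending)) => //.
apply: (@reaches_le _ _ ((size pre).+1 + (n + (size r + 2).+1))); first by lia.
apply: reaches_trans (scan _ preS) _; rewrite map_cat map_nseq.
apply: reaches_trans (count _ _ _) _.
apply: reaches_step_trans; rewrite /step /= count_step_other //=.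
rewrite -(size_map (fun s => sym_cell s) r) -[X in reaches (_, _, X)]cats0.
apply: reaches_trans (walk_right_overwrite _ _ _) _; first by move=> _ /mapP[s _ ->].
do 2!apply: reaches_step_trans; exists 0 => //=.
by rewrite /rejected map_cat /= !map_nseq -catA.
Qed.

Lemma split_leading_ones (r : seq sym) :
  (exists n, r = nseq n One) \/ exists n y r', r = nseq n One ++ y :: r' /\ y != One.
Proof.
elim: r => [|x r IH]; first by left; exists 0.
case: (eqVneq x One) => [->|xOne]; last by right; exists 0, x, r.
case: IH => [[n ->]|[n [y [r' [-> yOne]]]]]; first by left; exists n.+1.
by right; exists n.+1, y, r'.
Qed.

Lemma run_reject pre rest : Stop \notin pre -> (forall n, rest <> nseq n.+2 One) ->
  exists2 k, k <= size pre + size rest + 5 &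
    halts_with M (pre ++ Stop :: rest) k (reject_instance pre).
Proof.
move=> preS not_star.
case: (split_leading_ones rest) => [[n erest] | [n [y [r [-> yOne]]]]].
  have n_le1 : n <= 1 by case: n erest => [|[|n]] // /not_star.
  have [k kb halts_k] := reject_short preS n_le1.
  by exists k; rewrite erest // size_nseq; lia.
have [k kb halts_k] := reject_junk n r preS yOne.
by exists k => //; rewrite size_cat size_nseq /=; lia.
Qed.

Lemma output_finished pre m :
  @tape_output M (finished m (rev [seq sym_cell s | s <- pre])) = pre ++ Stop :: enc_graph (star m).
Proof.
rewrite tape_outputE /= rev_cat rev_cons revK rev_nseq -cats1 -!catA /written.
rewrite -(map_nseq m (fun s => sym_cell s)) !pmap_cat !pmap_sym_of_sym.
by rewrite enc_graph_star nseqSr cat_rcons.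
Qed.

Lemma run_star pre n : Stop \notin pre ->
  exists2 k, k <= size pre + 5 * n.+2 + 8 + n.+2 * (10 * (n.+2 + 3) ^ 3) &
    halts_with M (pre ++ Stop :: nseq n.+2 One) k (pre ++ Stop :: enc_graph (star n.+2)).
Proof.
move=> preS; set m := n.+2; set L := rev [seq sym_cell s | s <- pre].
apply: halts_of_reaches _ _ (output_finished pre m) => //.
rewrite -[nseq m One]cats0.
apply: reaches_le (reaches_trans (scan _ preS) _); last first.
  rewrite map_cat map_nseq; apply: reaches_trans (count _ _ _) (reaches_step_trans _).
  apply: reaches_step_trans.
  have := @reaches_return BackToRound Round (fun x => erefl) (nseq m (mark_cell Pending))
    (sym_cell One) L [:: sym_cell Sep].
  rewrite rev_nseq => back.
  apply: reaches_trans (back _) (reaches_trans (rounds L (leqnn m)) _).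
    by rewrite /= is_content_nseq.
  by rewrite subnn; apply: finish.
by rewrite size_nseq; lia.
Qed.

(** * Running time *)

Lemma star_time_bound p n :
  p + 5 * n + 8 + n * (10 * (n + 3) ^ 3) <= 300 * (p + 1 + n) ^ 4 + 300.
Proof.
set N := p + 1 + n.
have := @leq_expn N 4 isT.
have : n * (10 * (n + 3) ^ 3) <= N * (10 * (3 * N) ^ 3).
  by apply: leq_mul; [lia | rewrite leq_mul2l leq_exp2r //; lia].
rewrite !expnMn !expnS !expn0; nia.
Qed.

Lemma M_computes_reduce w : exists2 k, k <= 300 * size w ^ 4 + 300 & halts_with M w k (reduce w).
Proof.
have linear_bound N : N + 5 <= 300 * N ^ 4 + 300.
  by have := @leq_expn N 4 isT; lia.
case: reduceP => [{}w wS | pre n preS | pre rest preS not_star].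
- have [k kb halts_k] := run_noStop wS.
  by exists k => //; apply: leq_trans kb (leq_trans (leq_addr 5 _) (linear_bound _)).
- have [k kb halts_k] := run_star n preS.
  exists k => //; apply: leq_trans kb _.
  by rewrite size_cat /= size_nseq -[n.+3]add1n addnA star_time_bound.
- have [k kb halts_k] := run_reject preS not_star.
  by exists k => //; apply: leq_trans kb (leq_trans _ (linear_bound _)); rewrite size_cat /=; lia.
Qed.

Theorem mainTheorem8 : poly_reducible PermRep TreeRep.
Proof.
exists M, 300, 4 => w; have [k kb halts_k] := M_computes_reduce w.
by exists k, (reduce w); split=> //; split=> //; apply: PermRep_reduce.
Qed.
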